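(* Let $\overline{G}_n=\overline{H}_0\overline{H}_1\cdots\overline{H}_{n-1}$ be a polyphenyl hexagonal chain with $n$ hexagons and $G_n=H_0H_1\cdots H_{n-1}$ its hexagonal squeeze. Then $$25\,W(\overline{G}_n)=36\,W(G_n)+150n^3-270n^2-177n.$$
   Context: The Wiener index is $W(G)=\sum_{\{u,v\}\subseteq V(G)}d_G(u,v)$, $d_G$ the shortest-path distance. A polyphenyl hexagonal chain $\overline{G}_n=\overline{H}_0\cdots\overline{H}_{n-1}$ of length $n$ consists of pairwise vertex-disjoint hexagons (6-cycles) $\overline{H}_0,\dots,\overline{H}_{n-1}$ together with cut-edges: $\overline{G}_1=\overline{H}_0$, and for $k\ge1$, $\overline{G}_{k+1}$ is obtained from $\overline{G}_k$ by adding $\overline{H}_k$ and a cut-edge joining a vertex $c_k$ of $\overline{H}_k$ to a vertex $t_k$ of $\overline{H}_{k-1}$, where for $k\ge2$, $t_k\ne c_{k-1}$. The hexagonal squeeze of $\overline{G}_n$ is the graph $G_n$ obtained by contracting every cut-edge $c_kt_k$ into a single vertex; it is a spiro hexagonal chain, i.e. a connected graph whose blocks are $n$ hexagons $H_0,\dots,H_{n-1}$, consecutive hexagons $H_{k-1},H_k$ sharing one cut-vertex, each cut-vertex shared by exactly two hexagons and each hexagon having at most two cut-vertices. *)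

From mathcomp Require Import all_boot all_order all_algebra.
Set Implicit Arguments. Unset Strict Implicit. Unset Printing Implicit Defensive.

Fixpoint ball (T : finType) (e : rel T) (k : nat) (u : T) : {set T} :=
  if k is k'.+1 then
    ball e k' u :|: [set y | [exists x in ball e k' u, e x y]]
  else [set u].

(* shortest-path distance: least k such that v is within k steps of u
   (search over k < #|T|, which suffices for connected graphs). *)
Definition dist (T : finType) (e : rel T) (u v : T) : nat :=
  find (fun k => v \in ball e k u) (iota 0 #|T|).

Definition wiener (T : finType) (e : rel T) : nat :=
  \sum_(u : T) \sum_(v : T | enum_rank u < enum_rank v) dist e u v.

(* vertex (k, i): vertex i (cyclic labelling 0..5) of hexagon H_k *)
Definition pvert (n : nat) := ('I_n * 'I_6)%type.

Definition hexadj (i j : 'I_6) : bool :=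
  (val j == (val i).+1 %% 6) || (val i == (val j).+1 %% 6).

Definition hex_edge (n : nat) (x y : pvert n) : bool :=
  (val x.1 == val y.1) && hexadj x.2 y.2.

(* cut-edge c_k t_k : x = (k, c k) in H_k, y = (k-1, t k) in H_{k-1}, k >= 1 *)
Definition cut_edge (n : nat) (c t : nat -> 'I_6) (x y : pvert n) : bool :=
  [&& 0 < val x.1, val y.1 == (val x.1).-1, x.2 == c (val x.1) & y.2 == t (val x.1)].

Definition pp_edge (n : nat) (c t : nat -> 'I_6) : rel (pvert n) :=
  fun x y => [|| hex_edge x y, cut_edge c t x y | cut_edge c t y x].

(* representatives of the classes of the contraction: (k, c k) with k >= 1
   is identified with (k-1, t k); we keep the latter *)
Definition rep (n : nat) (c : nat -> 'I_6) (x : pvert n) : bool :=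
  (val x.1 == 0) || (x.2 != c (val x.1)).

Definition pred_ord (n : nat) (k : 'I_n) : 'I_n :=
  Ordinal (leq_ltn_trans (leq_pred k) (ltn_ord k)).

Definition rmap (n : nat) (c t : nat -> 'I_6) (x : pvert n) : pvert n :=
  if rep c x then x else (pred_ord x.1, t (val x.1)).

Definition sq_vert (n : nat) (c : nat -> 'I_6) := {x : pvert n | rep c x}.

Definition sq_edge (n : nat) (c t : nat -> 'I_6) : rel (sq_vert n c) :=
  fun x y => [exists a : pvert n, exists b : pvert n,
    [&& hex_edge a b, rmap c t a == val x & rmap c t b == val y]].

From mathcomp Require Import all_boot all_order all_algebra zify.
Import GRing.Theory Num.Theory.
Set Implicit Arguments. Unset Strict Implicit. Unset Printing Implicit Defensive.

(* Geodesics in both chains are forced: from vertex a of H_j to vertex b of H_k,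
   j < k, a shortest path leaves H_j at t_(j+1), crosses each intermediate H_m
   along a shortest arc from c_m to t_(m+1) and enters H_k at c_k.  Its length is
   the sum of these hexagon distances plus one per cut-edge, and contracting the
   cut-edges removes exactly that last term, so both graphs share one distance
   formula with cut-edge weight e = 1 or e = 0.  Summed over pairs of hexagons,
   the arc lengths d(c_m, t_(m+1)) enter 25 W(Gbar_n) and 36 W(G_n) with the same
   total coefficient, so the difference is a polynomial in n. *)

Lemma double_sum_separable (I J : finType) (A : pred I) (B : pred J)
    (f : I -> nat) K (g : J -> nat) :
  \sum_(a | A a) \sum_(b | B b) (f a + K + g b) =
  #|B| * \sum_(a | A a) f a + #|A| * #|B| * K + #|A| * \sum_(b | B b) g b.
Proof.
under eq_bigr do rewrite big_split /= sum_nat_const.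
by rewrite !big_split /= !sum_nat_const -!big_distrr /= big_split /= sum_nat_const; lia.
Qed.

Lemma sum_symmetric (F : nat -> nat -> nat) n : (forall j k, F j k = F k j) ->
  \sum_(0 <= j < n) \sum_(0 <= k < n) F j k =
  \sum_(0 <= j < n) F j j + 2 * \sum_(0 <= k < n) \sum_(0 <= j < k) F j k.
Proof.
move=> FC; elim: n => [|n IH]; first by rewrite !big_geq.
have row j : \sum_(0 <= k < n.+1) F j k = \sum_(0 <= k < n) F j k + F j n.
  by rewrite big_nat_recr.
have col : \sum_(0 <= k < n) F n k = \sum_(0 <= j < n) F j n.
  by apply: eq_bigr => k _; rewrite FC.
rewrite big_nat_recr //= (eq_bigr _ (fun j _ => row j)) big_split /= IH row col.
rewrite [\sum_(0 <= j < n.+1) F j j]big_nat_recr //=.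
by rewrite [\sum_(0 <= k < n.+1) _]big_nat_recr //=; lia.
Qed.

Section Distances.

Variables (T : finType) (e : rel T).

Lemma find_iota_leq m N : m < N -> find (fun k => m <= k) (iota 0 N) = m.
Proof.
move=> lt_mN; rewrite -(subnKC (ltnW lt_mN)) iotaD find_cat size_iota.
have -> : has (fun k => m <= k) (iota 0 m) = false.
  by apply/hasP => -[k]; rewrite mem_iota add0n => /andP[_ lt_km]; rewrite leqNgt lt_km.
by case: (N - m) => [|r] /=; rewrite ?add0n ?leqnn addn0.
Qed.

Lemma dist_potential u (f : T -> nat) :
  f u = 0 -> (forall v, v != u -> 0 < f v) ->
  (forall x y, e x y -> f y <= (f x).+1) ->
  (forall v, 0 < f v -> exists2 x, e x v & (f x).+1 = f v) ->
  (forall v, f v < #|T|) ->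
  forall v, dist e u v = f v.
Proof.
move=> fu0 f_pos f_lip f_pred f_lt v.
have ball_le k w : w \in ball e k u -> f w <= k.
  elim: k w => [|k IH] w /=; first by rewrite in_set1 => /eqP->; rewrite fu0.
  case/setUP => [/IH|]; first exact: leqW.
  by rewrite inE => /existsP[x /andP[/IH le_x /f_lip le_w]]; apply: leq_trans le_w _.
have le_ball k w : f w <= k -> w \in ball e k u.
  elim: k w => [|k IH] w /=.
    by rewrite leqn0 in_set1; apply: contraTT => /f_pos; rewrite lt0n.
  rewrite leq_eqVlt ltnS => /orP[/eqP fw|/IH]; last by rewrite inE => ->.
  have [x exw fx] : exists2 x, e x w & (f x).+1 = f w by apply: f_pred; rewrite fw.
  apply/setUP; right; rewrite inE; apply/existsP; exists x.
  by rewrite exw IH // -ltnS fx fw.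
rewrite /dist (@eq_find _ _ (fun k => f v <= k)) ?find_iota_leq // => k.
by apply/idP/idP => [/ball_le|/le_ball].
Qed.

Lemma dist_nn u : dist e u u = 0.
Proof.
by rewrite /dist (cardD1 u) inE add1n /= in_set1 eqxx.
Qed.

Lemma wiener_double : (forall u v, dist e u v = dist e v u) ->
  2 * wiener e = \sum_u \sum_v dist e u v.
Proof.
move=> dist_sym.
have split_row u : \sum_v dist e u v = \sum_(v | enum_rank u < enum_rank v) dist e u v
                                     + \sum_(v | enum_rank v < enum_rank u) dist e u v.
  rewrite (bigID (fun v => enum_rank u < enum_rank v)) /=; congr (_ + _).
  rewrite [LHS](bigD1 u) ?ltnn //= dist_nn; apply: eq_bigl => v.
  by rewrite -leqNgt ltn_neqAle (inj_eq val_inj) (inj_eq enum_rank_inj) andbC.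
have swap : \sum_u \sum_(v | enum_rank v < enum_rank u) dist e u v =
            \sum_u \sum_(v | enum_rank u < enum_rank v) dist e u v.
  rewrite (exchange_big_dep xpredT) //=.
  by apply: eq_bigr => u _; apply: eq_bigr => v _; apply: dist_sym.
by rewrite (eq_bigr _ (fun u _ => split_row u)) big_split /= swap addnn mul2n.
Qed.

End Distances.

Definition hexd (a b : 'I_6) : nat :=
  let d := maxn a b - minn a b in minn d (6 - d).

Lemma hexdC a b : hexd a b = hexd b a.
Proof. by rewrite /hexd maxnC (minnC a). Qed.

Lemma hexdnn a : hexd a a = 0.
Proof. by rewrite /hexd maxnn minnn subnn. Qed.

Lemma hexd_eq0 a b : (hexd a b == 0) = (a == b).
Proof. by case: a b => [[|[|[|[|[|[|?]]]]]] ?] [[|[|[|[|[|[|?]]]]]] ?]. Qed.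

Lemma hexd_le3 a b : hexd a b <= 3.
Proof. by case: a b => [[|[|[|[|[|[|?]]]]]] ?] [[|[|[|[|[|[|?]]]]]] ?]. Qed.

Lemma hexd_adj_le a b b' : hexadj b b' -> hexd a b' <= (hexd a b).+1.
Proof.
apply/implyP.
by case: a b b' => [[|[|[|[|[|[|?]]]]]] ?] [[|[|[|[|[|[|?]]]]]] ?] [[|[|[|[|[|[|?]]]]]] ?].
Qed.

Lemma hexd_step a b :
  0 < hexd a b -> exists2 b', hexadj b' b & (hexd a b').+1 = hexd a b.
Proof.
move=> hab; exists (if hexd a (ordS b) < hexd a b then ordS b else ord_pred b);
  by move: hab; case: a b => [[|[|[|[|[|[|?]]]]]] ?] [[|[|[|[|[|[|?]]]]]] ?].
Qed.

Lemma hexd_sumr a : \sum_b hexd a b = 9.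
Proof. by rewrite !big_ord_recr big_ord0; case: a => [[|[|[|[|[|[|?]]]]]] ?]. Qed.

Lemma hexd_suml a : \sum_b hexd b a = 9.
Proof. by rewrite -(hexd_sumr a); apply: eq_bigr => b _; apply: hexdC. Qed.

Lemma hexd_sum_neqr x y : \sum_(b | b != x) hexd y b + hexd y x = 9.
Proof. by rewrite -(hexd_sumr y) [in RHS](bigD1 x) //= addnC. Qed.

Lemma hexd_sum_neql x y : \sum_(a | a != x) hexd a y + hexd x y = 9.
Proof.
by rewrite -(hexd_sum_neqr x y) hexdC; congr (_ + _); apply: eq_bigr => a _; apply: hexdC.
Qed.

Lemma card_neq (x : 'I_6) : #|(fun a => a != x)| = 5.
Proof. by rewrite (@eq_card _ _ (predC1 x)) // cardC1 card_ord. Qed.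

Section ChainDistance.

Variables c t : nat -> 'I_6.

Definition transit m := hexd (c m) (t m.+1).

Definition transits j k := \sum_(j.+1 <= m < k) transit m.

Definition chain_fwd e j a k b :=
  hexd a (t j.+1) + transits j k + hexd (c k) b + e * (k - j).

(* A cut-edge has length [e]: 1 in the polyphenyl chain, 0 in its squeeze. *)
Definition chain_dist e j a k b :=
  if j == k then hexd a b else if j < k then chain_fwd e j a k b else chain_fwd e k b j a.

(* The vertex of H_k through which geodesics from vertex a of H_j enter H_k. *)
Definition gate j a k : 'I_6 := if k == j then a else if k < j then t k.+1 else c k.

Lemma chain_distC e j a k b : chain_dist e j a k b = chain_dist e k b j a.
Proof.
rewrite /chain_dist eq_sym; case: eqP => [_|ne]; first exact: hexdC.
by case: (ltngtP j k) ne => // ->.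
Qed.

Lemma chain_distnn e j a : chain_dist e j a j a = 0.
Proof. by rewrite /chain_dist eqxx hexdnn. Qed.

Lemma chain_dist_gate e j a k b :
  chain_dist e j a k b = chain_dist e j a k (gate j a k) + hexd (gate j a k) b.
Proof.
rewrite /chain_dist /gate eq_sym; case: eqP => [_|/eqP ne]; first by rewrite hexdnn.
rewrite /chain_fwd; case: ltnP => lt_jk.
  by rewrite ltnNge (ltnW lt_jk) /= hexdnn; lia.
have lt_kj : k < j by rewrite ltn_neqAle ne.
by rewrite lt_kj hexdnn (hexdC b); lia.
Qed.

Lemma chain_dist_adj_le e j a k b b' :
  hexadj b b' -> chain_dist e j a k b' <= (chain_dist e j a k b).+1.
Proof.
move=> /(hexd_adj_le (gate j a k)) le_b.
by rewrite [X in X <= _]chain_dist_gate [X in _ <= X.+1]chain_dist_gate -addnS leq_add2l.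
Qed.

Lemma chain_dist_step e j a k b : 0 < chain_dist e j a k b ->
  (exists2 b', hexadj b' b & (chain_dist e j a k b').+1 = chain_dist e j a k b)
  \/ b = gate j a k /\ k != j.
Proof.
rewrite chain_dist_gate.
case: (posnP (hexd (gate j a k) b)) => [|/hexd_step[b' adj_b' hb']] hb.
  move/eqP: hb; rewrite hexd_eq0 => /eqP <-; rewrite hexdnn addn0 => pos.
  right; split => //.
  by apply: contraTneq pos => ->; rewrite /gate eqxx chain_distnn.
by left; exists b' => //; rewrite -hb' [in LHS]chain_dist_gate addnS.
Qed.

Lemma chain_dist_cut_fwd e j a K : j <= K ->
  chain_dist e j a K.+1 (c K.+1) = chain_dist e j a K (t K.+1) + e.
Proof.
rewrite /chain_dist /chain_fwd leq_eqVlt => /orP[/eqP->|lt_jK].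
  by rewrite eqxx ltnSn (ltn_eqF (ltnSn K)) /transits big_geq // hexdnn; lia.
rewrite (ltn_eqF lt_jK) lt_jK ltnW // (ltn_eqF (ltnW _)) //.
have -> : K.+1 - j = (K - j).+1 by lia.
by rewrite /transits big_nat_recr //= hexdnn mulnS /transit; lia.
Qed.

Lemma chain_dist_cut_bwd e j a K : K < j ->
  chain_dist e j a K (t K.+1) = chain_dist e j a K.+1 (c K.+1) + e.
Proof.
rewrite !(chain_distC e j a) => lt_Kj.
rewrite /chain_dist /chain_fwd (ltn_eqF lt_Kj) lt_Kj; move: lt_Kj.
rewrite leq_eqVlt => /orP[/eqP<-|lt_SKj].
  by rewrite eqxx /transits big_geq // hexdnn; lia.
have -> : j - K = (j - K.+1).+1 by lia.
by rewrite (ltn_eqF lt_SKj) lt_SKj /transits big_ltn //= hexdnn mulnS /transit; lia.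
Qed.

Lemma chain_dist_cut_le e j a K :
  chain_dist e j a K (t K.+1) <= chain_dist e j a K.+1 (c K.+1) + e /\
  chain_dist e j a K.+1 (c K.+1) <= chain_dist e j a K (t K.+1) + e.
Proof.
by case: (leqP j K) => [/chain_dist_cut_fwd|/chain_dist_cut_bwd] ->; split; lia.
Qed.

Lemma chain_dist_cut0 j a K :
  chain_dist 0 j a K.+1 (c K.+1) = chain_dist 0 j a K (t K.+1).
Proof.
by case: (leqP j K) => [/chain_dist_cut_fwd|/chain_dist_cut_bwd] ->; rewrite addn0.
Qed.

Lemma chain_dist_gt0 e j a k b : (j, a) != (k, b) ->
  (j < k -> 0 < e + hexd (c k) b) -> (k < j -> 0 < e + hexd (c j) a) ->
  0 < chain_dist e j a k b.
Proof.
rewrite xpair_eqE /chain_dist /chain_fwd => ne hk hj.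
case: (ltngtP j k) => [lt_jk|lt_kj|eq_jk]; first by have := hk lt_jk; nia.
  by have := hj lt_kj; nia.
by rewrite eq_jk eqxx /= in ne; rewrite lt0n hexd_eq0.
Qed.

Lemma transits_le j k : transits j k <= 3 * (k - j.+1).
Proof.
rewrite mulnC -sum_nat_const_nat.
by apply: leq_sum => m _; apply: hexd_le3.
Qed.

Lemma chain_dist_le e j a k b m :
  j < m -> k < m -> chain_dist e j a k b <= 3 + (3 + e) * m.-1.
Proof.
rewrite /chain_dist /chain_fwd => lt_jm lt_km; case: (ltngtP j k) => [lt_jk|lt_kj|_].
- have := transits_le j k; have := hexd_le3 a (t j.+1); have := hexd_le3 (c k) b; nia.
- have := transits_le k j; have := hexd_le3 b (t k.+1); have := hexd_le3 (c j) a; nia.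
- exact: leq_trans (hexd_le3 a b) (leq_addr _ _).
Qed.

Definition kept j (a : 'I_6) := (j == 0) || (a != c j).

Definition pp_block j k := \sum_a \sum_b chain_dist 1 j a k b.

Definition sq_block j k := \sum_(a | kept j a) \sum_(b | kept k b) chain_dist 0 j a k b.

Lemma pp_blockC j k : pp_block j k = pp_block k j.
Proof.
rewrite /pp_block exchange_big; apply: eq_bigr => a _; apply: eq_bigr => b _.
exact: chain_distC.
Qed.

Lemma sq_blockC j k : sq_block j k = sq_block k j.
Proof.
rewrite /sq_block exchange_big; apply: eq_bigr => a _; apply: eq_bigr => b _.
exact: chain_distC.
Qed.

Lemma chain_dist_same e j a b : chain_dist e j a j b = hexd a b.
Proof. by rewrite /chain_dist eqxx. Qed.

Lemma pp_block_diag j : pp_block j j = 54.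
Proof.
rewrite /pp_block; under eq_bigr do under eq_bigr do rewrite chain_dist_same.
by under eq_bigr do rewrite hexd_sumr; rewrite sum_nat_const card_ord.
Qed.

Lemma pp_block_lt j k : j < k -> pp_block j k = 108 + 36 * (transits j k + (k - j)).
Proof.
move=> lt_jk; rewrite /pp_block.
transitivity (\sum_(a | xpredT a) \sum_(b | xpredT b)
  (hexd a (t j.+1) + (transits j k + (k - j)) + hexd (c k) b)).
  apply: eq_bigr => a _; apply: eq_bigr => b _.
  by rewrite /chain_dist (ltn_eqF lt_jk) lt_jk /chain_fwd; lia.
by rewrite double_sum_separable !card_ord hexd_suml hexd_sumr; lia.
Qed.

Lemma sq_block_diag0 : sq_block 0 0 = 54.
Proof.
rewrite /sq_block /kept eqxx /=; under eq_bigr do under eq_bigr do rewrite chain_dist_same.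
by under eq_bigr do rewrite hexd_sumr; rewrite sum_nat_const card_ord.
Qed.

Lemma sq_block_diag j : 0 < j -> sq_block j j = 36.
Proof.
move=> j_gt0; rewrite /sq_block /kept (gtn_eqF j_gt0) /=.
under eq_bigr do under eq_bigr do rewrite chain_dist_same.
apply/eqP; rewrite -(eqn_add2r (\sum_(a | a != c j) hexd a (c j))) -big_split /=.
under eq_bigr do rewrite hexd_sum_neqr.
by have := hexd_sum_neql (c j) (c j); rewrite hexdnn addn0 sum_nat_const card_neq => ->.
Qed.

Lemma sq_block_0k k : 0 < k -> sq_block 0 k = 99 + 30 * transits 0 k.
Proof.
move=> k_gt0; rewrite /sq_block /kept eqxx (gtn_eqF k_gt0) /=.
transitivity (\sum_(a | xpredT a) \sum_(b | b != c k)
  (hexd a (t 1) + transits 0 k + hexd (c k) b)).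
  apply: eq_bigr => a _; apply: eq_bigr => b _.
  by rewrite /chain_dist (ltn_eqF k_gt0) k_gt0 /chain_fwd mul0n addn0.
rewrite double_sum_separable card_ord card_neq hexd_suml.
by have := hexd_sum_neqr (c k) (c k); rewrite hexdnn; lia.
Qed.

Lemma sq_block_lt j k :
  0 < j < k -> sq_block j k + 5 * transit j = 90 + 25 * transits j k.
Proof.
case/andP=> j_gt0 lt_jk; have k_gt0 := ltn_trans j_gt0 lt_jk.
rewrite /sq_block /kept (gtn_eqF j_gt0) (gtn_eqF k_gt0) /=.
transitivity (\sum_(a | a != c j) \sum_(b | b != c k)
  (hexd a (t j.+1) + transits j k + hexd (c k) b) + 5 * transit j).
  congr (_ + _); apply: eq_bigr => a _; apply: eq_bigr => b _.
  by rewrite /chain_dist (ltn_eqF lt_jk) lt_jk /chain_fwd mul0n addn0.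
rewrite double_sum_separable !card_neq.
have := hexd_sum_neqr (c k) (c k); have := hexd_sum_neql (c j) (t j.+1).
by rewrite hexdnn /transit; lia.
Qed.

Lemma sum_pp_diag n : \sum_(0 <= j < n) pp_block j j = 54 * n.
Proof.
rewrite (eq_bigr (fun _ => 54)) => [|j _]; last exact: pp_block_diag.
by rewrite sum_nat_const_nat subn0 mulnC.
Qed.

Lemma sum_sq_diag n : \sum_(0 <= j < n.+1) sq_block j j = 18 + 36 * n.+1.
Proof.
rewrite big_ltn // sq_block_diag0 (@eq_big_nat _ _ _ 1 n.+1 _ (fun _ => 36)).
  by rewrite sum_nat_const_nat; lia.
by move=> j /andP[j_gt0 _]; apply: sq_block_diag.
Qed.

Definition pp_column k := \sum_(0 <= j < k) pp_block j k.

Definition sq_column k := \sum_(0 <= j < k) sq_block j k.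

Lemma sum_subn_triangular k : 2 * \sum_(0 <= j < k) (k - j) = k * k.+1.
Proof.
elim: k => [|k IH]; first by rewrite big_geq.
rewrite big_ltn // big_add1 /=.
under eq_bigr do rewrite subSS.
by rewrite mulnDr IH; lia.
Qed.

Lemma pp_column_eq k :
  pp_column k = 108 * k + 18 * (k * k.+1) + 36 * \sum_(0 <= j < k) transits j k.
Proof.
rewrite /pp_column -(sum_subn_triangular k).
transitivity (\sum_(0 <= j < k) (108 + 36 * transits j k + 36 * (k - j))).
  by apply: eq_big_nat => j /andP[_ lt_jk]; rewrite pp_block_lt // mulnDr addnA.
rewrite big_split big_split /= sum_nat_const_nat.
have -> : \sum_(0 <= j < k) 36 * transits j k = 36 * \sum_(0 <= j < k) transits j k.
  by rewrite big_distrr.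
have -> : \sum_(0 <= j < k) 36 * (k - j) = 36 * \sum_(0 <= j < k) (k - j).
  by rewrite big_distrr.
lia.
Qed.

Lemma sq_column_eq k : 0 < k ->
  sq_column k = 9 + 90 * k + 25 * \sum_(0 <= j < k) transits j k.
Proof.
move=> k_gt0; rewrite /sq_column big_ltn // [in RHS]big_ltn // sq_block_0k //.
have : \sum_(1 <= j < k) (sq_block j k + 5 * transit j) =
       \sum_(1 <= j < k) (90 + 25 * transits j k).
  by apply: eq_big_nat => j; apply: sq_block_lt.
rewrite [\sum_(1 <= j < k) (sq_block j k + _)]big_split.
rewrite [\sum_(1 <= j < k) (90 + _)]big_split /= sum_nat_const_nat.
have -> : \sum_(1 <= j < k) 5 * transit j = 5 * transits 0 k by rewrite big_distrr.
have -> : \sum_(1 <= j < k) 25 * transits j k = 25 * \sum_(1 <= j < k) transits j k.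
  by rewrite big_distrr.
lia.
Qed.

Lemma column_identity k : 0 < k ->
  25 * pp_column k + 540 * k + 324 = 36 * sq_column k + 450 * (k * k.+1).
Proof. by move=> k_gt0; rewrite pp_column_eq sq_column_eq //; lia. Qed.

Lemma sum_columns n :
  25 * \sum_(0 <= k < n.+1) pp_column k + 270 * (n * n.+1) + 324 * n =
  36 * \sum_(0 <= k < n.+1) sq_column k + 150 * (n * n.+1 * n.+2).
Proof.
elim: n => [|n IH]; first by rewrite !big_nat1 /pp_column /sq_column !big_geq.
rewrite big_nat_recr // [\sum_(0 <= k < n.+2) sq_column k]big_nat_recr //=.
by have := column_identity (ltn0Sn n); nia.
Qed.

End ChainDistance.

Section ChainGraphs.

Variables (n : nat) (c t : nat -> 'I_6).

Lemma sum_pvert (P : nat -> 'I_6 -> bool) (F : nat -> 'I_6 -> nat) :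
  \sum_(x : pvert n | P x.1 x.2) F x.1 x.2 = \sum_(0 <= j < n) \sum_(a | P j a) F j a.
Proof.
rewrite -(pair_big_dep xpredT (fun (j : 'I_n) a => P j a) (fun (j : 'I_n) a => F j a)).
by rewrite big_mkord.
Qed.

Lemma sum_pvert2 (P : nat -> 'I_6 -> bool) (F : nat -> 'I_6 -> nat -> 'I_6 -> nat) :
  \sum_(x : pvert n | P x.1 x.2) \sum_(y : pvert n | P y.1 y.2) F x.1 x.2 y.1 y.2 =
  \sum_(0 <= j < n) \sum_(0 <= k < n) \sum_(a | P j a) \sum_(b | P k b) F j a k b.
Proof.
transitivity
  (\sum_(x : pvert n | P x.1 x.2) \sum_(0 <= k < n) \sum_(b | P k b) F x.1 x.2 k b).
  by apply: eq_bigr => x _; rewrite (sum_pvert P (F x.1 x.2)).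
rewrite (sum_pvert P (fun j a => \sum_(0 <= k < n) \sum_(b | P k b) F j a k b)).
by apply: eq_bigr => j _; rewrite exchange_big.
Qed.

Lemma sum_sq_vert (G : pvert n -> nat) :
  \sum_(x : sq_vert n c) G (val x) = \sum_(x | rep c x) G x.
Proof. by rewrite (big_sub (rep c)). Qed.

Lemma pvert_neq (x v : pvert n) : v != x -> (val x.1, x.2) != (val v.1, v.2).
Proof.
case: x v => [j a] [k b] /=; apply: contra; rewrite !xpair_eqE.
by case/andP=> /eqP/val_inj-> /eqP->; rewrite !eqxx.
Qed.

Lemma pp_edge_le (x v w : pvert n) : pp_edge c t v w ->
  chain_dist c t 1 x.1 x.2 w.1 w.2 <= (chain_dist c t 1 x.1 x.2 v.1 v.2).+1.
Proof.
case: v w => [[k hk] b] [[k' hk'] b']; rewrite /pp_edge /hex_edge /cut_edge /=.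
case/or3P => [/andP[/eqP<- adj]|/and4P[]|/and4P[]]; first exact: chain_dist_adj_le.
  case: k hk => [|K] //= _ _ /eqP-> /eqP-> /eqP->.
  by have [le _] := chain_dist_cut_le c t 1 x.1 x.2 K; rewrite addn1 in le.
case: k' hk' => [|K] //= _ _ /eqP-> /eqP-> /eqP->.
by have [_ le] := chain_dist_cut_le c t 1 x.1 x.2 K; rewrite addn1 in le.
Qed.

Lemma pp_edge_pred (x v : pvert n) : 0 < chain_dist c t 1 x.1 x.2 v.1 v.2 ->
  exists2 w, pp_edge c t w v &
    (chain_dist c t 1 x.1 x.2 w.1 w.2).+1 = chain_dist c t 1 x.1 x.2 v.1 v.2.
Proof.
case: v => [[k hk] b] /= pos.
have [[b' adj <-]|[-> ne_kj]] := chain_dist_step pos.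
  by exists (Ordinal hk, b'); rewrite // /pp_edge /hex_edge /= eqxx adj.
rewrite /gate (negbTE ne_kj); case: (ltnP k x.1) => [lt_kj|le_jk].
  exists (Ordinal (leq_ltn_trans lt_kj (ltn_ord x.1)), c k.+1).
    by rewrite /pp_edge /cut_edge /= !eqxx orbT.
  by rewrite /= (chain_dist_cut_bwd _ _ _ _ lt_kj) addn1.
case: k hk ne_kj le_jk {pos} => [|K] hK ne_kj le_jk.
  by move: ne_kj; rewrite eq_sym -leqn0 le_jk.
exists (Ordinal (ltnW hK), t K.+1); first by rewrite /pp_edge /cut_edge /= !eqxx !orbT.
have le_jK : x.1 <= K by rewrite -ltnS ltn_neqAle eq_sym ne_kj le_jk.
by rewrite /= (chain_dist_cut_fwd _ _ _ _ le_jK) addn1.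
Qed.

Lemma dist_pp (x y : pvert n) : dist (pp_edge c t) x y = chain_dist c t 1 x.1 x.2 y.1 y.2.
Proof.
apply: (@dist_potential _ _ _ (fun v : pvert n => chain_dist c t 1 x.1 x.2 v.1 v.2)).
- exact: chain_distnn.
- by move=> v /pvert_neq ne; apply: chain_dist_gt0.
- exact: pp_edge_le.
- exact: pp_edge_pred.
move=> v; rewrite card_prod !card_ord.
apply: leq_ltn_trans (chain_dist_le _ _ _ _ _ (ltn_ord _) (ltn_ord _)) _.
by have := ltn_ord x.1; lia.
Qed.

Lemma wiener_pp_blocks :
  2 * wiener (@pp_edge n c t) = \sum_(0 <= j < n) \sum_(0 <= k < n) pp_block c t j k.
Proof.
rewrite wiener_double; last by move=> u v; rewrite !dist_pp chain_distC.
under eq_bigr do under eq_bigr do rewrite dist_pp.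
exact: (sum_pvert2 (fun _ _ => true) (chain_dist c t 1)).
Qed.

Lemma rmap_id (w : pvert n) : rep c w -> rmap c t w = w.
Proof. by rewrite /rmap => ->. Qed.

Lemma chain_dist_rmap (x w : pvert n) :
  chain_dist c t 0 x.1 x.2 (rmap c t w).1 (rmap c t w).2 = chain_dist c t 0 x.1 x.2 w.1 w.2.
Proof.
rewrite /rmap; case: ifP => // /norP[]; case: w => [[[|K] hK] b] //= _ /negPn/eqP->.
by rewrite chain_dist_cut0.
Qed.

Lemma rep_hexd_gt0 (w : pvert n) : rep c w -> 0 < w.1 -> 0 < hexd (c w.1) w.2.
Proof. by rewrite /rep lt0n => /orP[->|] //; rewrite lt0n hexd_eq0 eq_sym. Qed.

Lemma sq_edge_le (x v w : sq_vert n c) : @sq_edge n c t v w ->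
  chain_dist c t 0 (val x).1 (val x).2 (val w).1 (val w).2 <=
  (chain_dist c t 0 (val x).1 (val x).2 (val v).1 (val v).2).+1.
Proof.
case/existsP=> v0 /existsP[w0 /and3P[hex_vw /eqP<- /eqP<-]]; rewrite !chain_dist_rmap.
case: v0 w0 hex_vw => [k b] [k' b'] /andP[/= /eqP/val_inj<-]; exact: chain_dist_adj_le.
Qed.

Lemma card_sq_vert : 0 < n -> #|{: sq_vert n c}| = (5 * n).+1.
Proof.
move=> n_gt0; rewrite card_sig -sum1_card (sum_pvert (kept c) (fun _ _ => 1)) big_ltn //.
rewrite {1}/kept eqxx sum_nat_const card_ord.
rewrite (@eq_big_nat _ _ _ 1 n _ (fun _ => 5)) ?sum_nat_const_nat; first by lia.
by move=> j /andP[j_gt0 _]; rewrite /kept (gtn_eqF j_gt0) sum_nat_const card_neq.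
Qed.

Hypothesis t_neq_c : forall k, 2 <= k < n -> t k != c k.-1.

Lemma rep_rmap (w : pvert n) : rep c (rmap c t w).
Proof.
rewrite /rmap; case: ifP => // /norP[]; case: w => [[[|[|k]] hk] b] //= _ _.
by rewrite /rep /= t_neq_c.
Qed.

Lemma sq_edge_pred (x v : sq_vert n c) :
  0 < chain_dist c t 0 (val x).1 (val x).2 (val v).1 (val v).2 ->
  exists2 w : sq_vert n c, @sq_edge n c t w v &
    (chain_dist c t 0 (val x).1 (val x).2 (val w).1 (val w).2).+1 =
    chain_dist c t 0 (val x).1 (val x).2 (val v).1 (val v).2.
Proof.
move=> pos; set f := fun y : pvert n => chain_dist c t 0 (val x).1 (val x).2 y.1 y.2.
suff [w0 [v0 hex_wv rmap_v0] fw0] : exists2 w0 : pvert n,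
    exists2 v0, hex_edge w0 v0 & rmap c t v0 = val v & (f w0).+1 = f (val v).
  exists (exist _ (rmap c t w0) (rep_rmap w0)); last by rewrite /= chain_dist_rmap.
  by apply/existsP; exists w0; apply/existsP; exists v0; rewrite hex_wv rmap_v0 !eqxx.
case: v pos => [[[k hk] b] rep_v] /= pos.
have [[b' adj fb']|[eq_b ne_kj]] := chain_dist_step pos.
  by exists (Ordinal hk, b'); first exists (Ordinal hk, b); rewrite /hex_edge /= ?eqxx ?rmap_id.
(* Otherwise [v] is the merged vertex t_(k+1) = c_(k+1): step back inside H_(k+1),
   where c_(k+1) is not the exit t_(k+2) by [t_neq_c]. *)
have lt_kj : k < (val x).1.
  move: rep_v; rewrite /rep /= eq_b /gate (negbTE ne_kj).
  case: ltnP => // le_jk; rewrite eqxx orbF => /eqP k0.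
  by move: ne_kj le_jk; rewrite k0 leqn0 eq_sym => /negbTE->.
have gate_k : gate c t (val x).1 (val x).2 k = t k.+1 by rewrite /gate (negbTE ne_kj) lt_kj.
pose k' := Ordinal (leq_ltn_trans lt_kj (ltn_ord (val x).1)).
have rmap_k' : rmap c t (k', c k') = (Ordinal hk, b).
  by rewrite /rmap /rep /= eqxx /= eq_b gate_k; congr pair; apply: val_inj.
have fk' : f (k', c k') = f (Ordinal hk, b) by rewrite /f /= chain_dist_cut0 eq_b gate_k.
have pos' : 0 < f (k', c k') by rewrite fk'.
have [[b' adj fb']|[eq_c ne_k'j]] := chain_dist_step pos'.
  by exists (k', b'); first exists (k', c k'); rewrite /hex_edge /= ?eqxx // -fk'.
have lt_k'j : k.+1 < (val x).1 by rewrite ltn_neqAle ne_k'j lt_kj.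
have := @t_neq_c k.+2 (leq_ltn_trans lt_k'j (ltn_ord _)).
by move: eq_c; rewrite /gate (negbTE ne_k'j) lt_k'j /= => <-; rewrite eqxx.
Qed.

Lemma dist_sq (x y : sq_vert n c) :
  dist (@sq_edge n c t) x y = chain_dist c t 0 (val x).1 (val x).2 (val y).1 (val y).2.
Proof.
apply: (@dist_potential _ _ _
  (fun v : sq_vert n c => chain_dist c t 0 (val x).1 (val x).2 (val v).1 (val v).2)).
- exact: chain_distnn.
- move=> v; rewrite -val_eqE => /pvert_neq ne.
  by apply: chain_dist_gt0 => // lt; apply: rep_hexd_gt0 (valP _) (leq_ltn_trans _ lt).
- exact: sq_edge_le.
- exact: sq_edge_pred.
have n_gt0 : 0 < n by apply: leq_ltn_trans (ltn_ord (val x).1).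
move=> v; rewrite card_sq_vert //.
apply: leq_ltn_trans (chain_dist_le _ _ _ _ _ (ltn_ord _) (ltn_ord _)) _.
by lia.
Qed.

Lemma wiener_sq_blocks :
  2 * wiener (@sq_edge n c t) = \sum_(0 <= j < n) \sum_(0 <= k < n) sq_block c t j k.
Proof.
rewrite wiener_double; last by move=> u v; rewrite !dist_sq chain_distC.
under eq_bigr do under eq_bigr do rewrite dist_sq.
pose F (x y : pvert n) := chain_dist c t 0 x.1 x.2 y.1 y.2.
transitivity (\sum_(x : sq_vert n c) \sum_(y : pvert n | rep c y) F (val x) y).
  by apply: eq_bigr => x _; rewrite (sum_sq_vert (F (val x))).
rewrite (sum_sq_vert (fun x => \sum_(y : pvert n | rep c y) F x y)).
exact: (sum_pvert2 (kept c) (chain_dist c t 0)).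
Qed.

End ChainGraphs.

Lemma wiener_pp_columns n c t :
  2 * wiener (@pp_edge n c t) = 54 * n + 2 * \sum_(0 <= k < n) pp_column c t k.
Proof. by rewrite wiener_pp_blocks (sum_symmetric _ (pp_blockC c t)) sum_pp_diag. Qed.

Lemma wiener_sq_columns n c t : (forall k, 2 <= k < n.+1 -> t k != c k.-1) ->
  2 * wiener (@sq_edge n.+1 c t) =
  18 + 36 * n.+1 + 2 * \sum_(0 <= k < n.+1) sq_column c t k.
Proof.
move=> t_neq_c.
by rewrite wiener_sq_blocks // (sum_symmetric _ (sq_blockC c t)) sum_sq_diag.
Qed.

Theorem theorem4p1 (n : nat) (c t : nat -> 'I_6)
  (Hct : forall k, 2 <= k < n -> t k != c k.-1) :
  ((25 * wiener (@pp_edge n c t))%N%:Z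
   = (36 * wiener (@sq_edge n c t))%N%:Z
     + 150 * (n%:Z) ^+ 3 - 270 * (n%:Z) ^+ 2 - 177 * n%:Z)%R.
Proof.
suff : 25 * wiener (@pp_edge n c t) + 270 * (n * n) + 177 * n =
       36 * wiener (@sq_edge n c t) + 150 * (n * n * n).
  by rewrite !exprS expr0 !mulr1; lia.
case: n Hct => [|m] Hct.
  by have := wiener_pp_columns 0 c t; have := wiener_sq_blocks Hct; rewrite !big_geq //; lia.
have := wiener_pp_columns m.+1 c t; have := wiener_sq_columns Hct; have := sum_columns c t m.
nia.
Qed.
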